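(* Let $G$ be a reduced abelian group which is super directly finite and is not torsion-free. Then every $p$-primary component of $G$ (i.e., of its torsion subgroup) is finite.
   Context: All groups are abelian. A group $G$ is directly finite if there is no decomposition $G=A\oplus C$ with $C\ne0$ and $A\cong G$; $G$ is super directly finite if every epimorphic image of $G$ is directly finite. A group is reduced if it has no nonzero divisible subgroup. *)

From mathcomp Require Import all_boot all_algebra.
Set Implicit Arguments. Unset Strict Implicit. Unset Printing Implicit Defensive.
Import GRing.Theory.
Local Open Scope ring_scope.

Definition is_subgroup (G : zmodType) (S : G -> Prop) : Prop :=
  S 0 /\ (forall x y, S x -> S y -> S (x - y)).

Definition is_hom (G H : zmodType) (f : G -> H) : Prop :=
  forall x y, f (x - y) = f x - f y.

(* G is directly finite: there is no decomposition G = A (+) C (internal direct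
   sum of subgroups) with C <> 0 and A isomorphic to G.  "A isomorphic to G" is
   expressed as: some injective homomorphism G -> G has image exactly A. *)
Definition directly_finite (G : zmodType) : Prop :=
  ~ exists (A C : G -> Prop),
      [/\ is_subgroup A /\ is_subgroup C,
          (forall x, A x -> C x -> x = 0),
          (forall g, exists a c, A a /\ C c /\ g = a + c),
          (exists c, C c /\ c <> 0) &
          exists phi : G -> G,
            [/\ is_hom phi, injective phi &
                forall a, A a <-> exists g, phi g = a]].

Definition super_directly_finite (G : zmodType) : Prop :=
  forall (H : zmodType) (f : G -> H), is_hom f -> (forall y : H, exists x, f x = y) ->
    directly_finite H.

Definition reduced (G : zmodType) : Prop :=
  forall D : G -> Prop, is_subgroup D ->
    (forall x n, D x -> (0 < n)%N -> exists y, D y /\ y *+ n = x) ->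
    forall x, D x -> x = 0.

Definition torsion_free (G : zmodType) : Prop :=
  forall (x : G) n, (0 < n)%N -> x *+ n = 0 -> x = 0.

Definition p_primary (G : zmodType) (p : nat) (x : G) : Prop :=
  exists k, x *+ (p ^ k) = 0.

Definition finite_pred (G : eqType) (S : G -> Prop) : Prop :=
  exists s : seq G, forall x, S x -> x \in s.

From mathcomp Require Import all_boot all_algebra cyclic.
From mathcomp Require classical_sets.
From Stdlib Require Import Classical ClassicalEpsilon.

(* Let T be the p-primary component of G.  If G/pG is finite then so is
   T/pT, as T is pure in G: T = span(t) + p^n T for a finite t in T and every n.
   For N with p^N t = 0, the subgroup p^N T is then p-divisible, hence divisible
   (its elements have p-power order), hence zero because G is reduced; so T is
   spanned by t with coefficients below p^N and is finite.  If G/pG is infinite,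
   pick g_0, g_1, ... independent modulo pG and, by Zorn's lemma, a subgroup A
   containing pG maximal with A meeting span(g_i) only inside pG.  Then G/A is
   isomorphic to F_p[X] (g_i |-> X^i), which is not directly finite, as
   F_p[X] = X F_p[X] (+) F_p. *)

Set Implicit Arguments. Unset Strict Implicit. Unset Printing Implicit Defensive.
Import GRing.Theory.
Local Open Scope ring_scope.

Lemma subrACA (G : zmodType) (a b c d : G) : (a - b) - (c - d) = (a - c) - (b - d).
Proof. by rewrite !opprD !opprK addrACA. Qed.

Lemma addn_mulnpred a p : (0 < p)%N -> (a + a * p.-1 = a * p)%N.
Proof. by move=> p_gt0; rewrite addnC -mulnSr prednK. Qed.

Lemma coprime_inv_modn m M : (0 < M)%N -> coprime m M ->
  exists u, (m * u = 1 %[mod M])%N.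
Proof.
move=> M_gt0 cmM; exists (m ^ (totient M).-1)%N.
by rewrite -expnS prednK ?totient_gt0 // Euler_exp_totient.
Qed.

Lemma mulrn_modn (G : zmodType) (x : G) M a : x *+ M = 0 -> x *+ a = x *+ (a %% M).
Proof. by move=> xM; rewrite {1}(divn_eq a M) mulrnDr mulnC mulrnA xM mul0rn add0r. Qed.

Lemma finite_witnesses (T U : eqType) (P : T -> Prop) (R : T -> U -> Prop)
    (s : seq U) :
  exists2 t : seq T, (forall z, z \in t -> P z) &
    forall y, y \in s -> (exists2 z, P z & R z y) -> exists2 z, z \in t & R z y.
Proof.
elim: s => [|y s [t tP tR]]; first by exists [::].
have [[z0 Pz0 Rz0]|noz] := classic (exists2 z, P z & R z y).
- exists (z0 :: t) => [z|y']; first by rewrite inE => /predU1P[->|/tP].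
  rewrite inE => /predU1P[-> _|/tR yt /yt[z zt Rz]]; first by exists z0; rewrite ?mem_head.
  by exists z; rewrite // inE zt orbT.
- by exists t => // y'; rewrite inE => /predU1P[-> /noz|/tR].
Qed.

Section Multiples.
Variables (G : zmodType) (p : nat).
Implicit Types x y z : G.

Definition p_multiple x := exists h, x = h *+ p.

Lemma p_multiple0 : p_multiple 0.
Proof. by exists 0; rewrite mul0rn. Qed.

Lemma p_multiple_mulrn x : p_multiple (x *+ p).
Proof. by exists x. Qed.

Lemma p_multipleB x y : p_multiple x -> p_multiple y -> p_multiple (x - y).
Proof. by move=> [a ->] [b ->]; exists (a - b); rewrite mulrnBl. Qed.

Lemma p_multipleN x : p_multiple x -> p_multiple (- x).
Proof. by move=> px; rewrite -sub0r; apply: p_multipleB => //; apply: p_multiple0. Qed.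

Lemma p_multipleD x y : p_multiple x -> p_multiple y -> p_multiple (x + y).
Proof. by move=> px py; rewrite -[y]opprK; apply: p_multipleB => //; apply: p_multipleN. Qed.

Lemma p_multipleMn x m : p_multiple x -> p_multiple (x *+ m).
Proof. by move=> [h ->]; exists (h *+ m); rewrite mulrnAC. Qed.

Lemma p_multiple_sum n (F : 'I_n -> G) :
  (forall i, p_multiple (F i)) -> p_multiple (\sum_(i < n) F i).
Proof. by move=> pF; apply: big_ind => //; [apply: p_multiple0|apply: p_multipleD]. Qed.

Lemma p_multiple_trans y x z :
  p_multiple (x - y) -> p_multiple (y - z) -> p_multiple (x - z).
Proof. by move=> pxy pyz; rewrite -[x](subrK y) -addrA; apply: p_multipleD. Qed.

Lemma p_multiple_modn x a b : (a = b %[mod p])%N -> p_multiple (x *+ a - x *+ b).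
Proof.
move=> eab; exists (x *+ (a %/ p) - x *+ (b %/ p)).
rewrite {1}(divn_eq a p) {1}(divn_eq b p) eab !mulrnDr !mulrnA mulrnBl.
by rewrite opprD addrACA subrr addr0.
Qed.

Definition finite_mod_p := exists s : seq G, forall x, exists2 y, y \in s & p_multiple (x - y).

End Multiples.

Section Subgroups.
Variables (G : zmodType) (S : G -> Prop).
Hypothesis subS : is_subgroup S.

Lemma subgroupN x : S x -> S (- x).
Proof. by case: subS => S0 SB Sx; rewrite -sub0r; apply: SB. Qed.

Lemma subgroupD x y : S x -> S y -> S (x + y).
Proof. by case: subS => _ SB Sx Sy; rewrite -[y]opprK; apply/SB/subgroupN. Qed.

Lemma subgroupMn x m : S x -> S (x *+ m).
Proof.
move=> Sx; elim: m => [|m IHm]; first by rewrite mulr0n; case: subS.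
by rewrite mulrS; apply: subgroupD.
Qed.

End Subgroups.

Section Spans.
Variable G : zmodType.
Implicit Types (s : seq G) (x y : G).

Definition nat_span s x := exists c : nat -> nat, x = \sum_(i < size s) s`_i *+ c i.

Lemma nat_span0 s : nat_span s 0.
Proof. by exists (fun=> 0%N); rewrite big1. Qed.

Lemma nat_spanD s x y : nat_span s x -> nat_span s y -> nat_span s (x + y).
Proof.
move=> [c ->] [d ->]; exists (fun i => c i + d i)%N.
by rewrite -big_split; apply: eq_bigr => i _; rewrite mulrnDr.
Qed.

Lemma nat_span_mem s z m : z \in s -> nat_span s (z *+ m).
Proof.
move=> zs; have zi : (index z s < size s)%N by rewrite index_mem.
exists (fun i => if i == index z s then m else 0%N).
rewrite (bigD1 (Ordinal zi)) //= eqxx nth_index // big1 ?addr0 // => i.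
by rewrite -val_eqE /= => /negbTE ->.
Qed.

Lemma finite_sums_modn s M : (0 < M)%N ->
  exists l : seq G, forall c, \sum_(i < size s) s`_i *+ (c i %% M) \in l.
Proof.
move=> M_gt0.
exists [seq \sum_(i < size s) s`_i *+ f i | f : {ffun 'I_(size s) -> 'I_M}] => c.
apply/mapP; exists [ffun i => Ordinal (ltn_pmod (c i) M_gt0)]; first by rewrite mem_enum.
by apply: eq_bigr => i _; rewrite ffunE.
Qed.

End Spans.

Section PPrimary.
Variables (G : zmodType) (p : nat).
Implicit Types x y : G.

Lemma p_primary0 : p_primary p (0 : G).
Proof. by exists 0%N; rewrite mul0rn. Qed.

Lemma p_primaryMn x m : p_primary p x -> p_primary p (x *+ m).
Proof. by move=> [k xk]; exists k; rewrite mulrnAC xk mul0rn. Qed.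

Lemma p_primaryB x y : p_primary p x -> p_primary p y -> p_primary p (x - y).
Proof.
move=> [a xa] [b yb]; exists (a + b)%N.
by rewrite mulrnBl expnD mulrnA xa mul0rn mulnC mulrnA yb mul0rn subr0.
Qed.

Lemma p_primaryKp x : p_primary p (x *+ p) -> p_primary p x.
Proof. by move=> [k xk]; exists k.+1; rewrite expnS mulrnA. Qed.

Lemma p_primary_seq_exp (s : seq G) : (forall z, z \in s -> p_primary p z) ->
  exists N, forall z, z \in s -> z *+ p ^ N = 0.
Proof.
elim: s => [|y s IHs] sP; first by exists 0%N.
have [|N sN] := IHs; first by move=> z zs; apply: sP; rewrite inE zs orbT.
have [k yk] := sP y (mem_head _ _).
exists (k + N)%N => z; rewrite inE => /predU1P[->|/sN zN].
  by rewrite expnD mulrnA yk mul0rn.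
by rewrite expnD mulnC mulrnA zN mul0rn.
Qed.

(* A p-divisible subgroup of p-primary elements is divisible: division by the
   part of [n] prime to [p] is multiplication by an inverse modulo the order. *)
Lemma reduced_p_divisible_eq0 (D : G -> Prop) : prime p -> reduced G ->
  is_subgroup D -> (forall x, D x -> p_primary p x) ->
  (forall x, D x -> exists2 y, D y & x = y *+ p) -> forall x, D x -> x = 0.
Proof.
move=> p_pr redG subD Dp Ddiv; apply: redG => // x n Dx n_gt0.
have [m cpm nE] := pfactor_coprime p_pr n_gt0.
have [y Dy xE] : exists2 y, D y & x = y *+ p ^ logn p n.
  elim: (logn p n) => [|a [y Dy ->]]; first by exists x; rewrite ?expn0.
  by have [z Dz ->] := Ddiv y Dy; exists z; rewrite // expnS mulrnA.
have [K xK] := Dp x Dx.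
have [u mu] : exists u, (m * u = 1 %[mod p ^ K])%N.
  by apply: coprime_inv_modn; rewrite ?expn_gt0 ?prime_gt0 // coprimeXr // coprime_sym.
exists (y *+ u); split; first exact: subgroupMn.
rewrite nE -mulrnA mulnA [(u * m)%N]mulnC mulnC mulrnA -xE.
by rewrite (mulrn_modn _ xK) mu -(mulrn_modn _ xK).
Qed.

End PPrimary.

Section FiniteModP.
Variables (G : zmodType) (p : nat).
Hypothesis p_pr : prime p.

(* [T] is pure in [G], so [T / pT] embeds into [G / pG]. *)
Lemma p_primary_cover : finite_mod_p G p ->
  exists2 t : seq G, (forall z, z \in t -> p_primary p z) &
    forall x, p_primary p x -> exists2 z, z \in t & exists2 h, p_primary p h & x = z + h *+ p.
Proof.
move=> [s sG].
have [t tP tR] := finite_witnesses (p_primary p) (fun z y => p_multiple p (z - y)) s.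
exists t => // x px; have [y ys [h1 xy]] := sG x.
have [|z zt [h2 zy]] := tR y ys; first by exists x; last exists h1.
have xz : x - z = (h1 - h2) *+ p by rewrite mulrnBl -xy -zy opprB addrA subrK.
exists z => //; exists (h1 - h2); last by rewrite -xz addrC subrK.
by apply: p_primaryKp; rewrite -xz; apply: p_primaryB => //; apply: tP.
Qed.

Lemma p_primary_decomp (t : seq G) :
  (forall x, p_primary p x -> exists2 z, z \in t & exists2 h, p_primary p h & x = z + h *+ p) ->
  forall n x, p_primary p x ->
    exists2 f, nat_span t f & exists2 h, p_primary p h & x = f + h *+ p ^ n.
Proof.
move=> tcover; elim=> [|n IHn] x px.
  by exists 0; [apply: nat_span0 | exists x; rewrite ?add0r].
have [f tf [h ph ->]] := IHn x px; have [z zt [h' ph' ->]] := tcover h ph.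
exists (f + z *+ p ^ n); first by apply: nat_spanD => //; apply: nat_span_mem.
by exists h' => //; rewrite mulrnDl addrA expnS mulrnA.
Qed.

Lemma finite_p_primary : reduced G -> finite_mod_p G p -> finite_pred (p_primary p (G:=G)).
Proof.
move=> redG /p_primary_cover[t tp /p_primary_decomp tdecomp].
have [N tN] := p_primary_seq_exp tp.
have spanN f : nat_span t f -> f *+ p ^ N = 0.
  by move=> [c ->]; rewrite -sumrMnl big1 // => i _; rewrite mulrnAC tN ?mul0rn ?mem_nth.
have pN (x : G) : p_primary p x -> x *+ p ^ N = 0.
  move=> px; pose D (y : G) := exists2 x : G, p_primary p x & y = x *+ p ^ N.
  apply: (reduced_p_divisible_eq0 p_pr redG (D := D)); last by exists x.
  - split; first by exists 0; rewrite ?mul0rn //; apply: p_primary0.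
    by move=> _ _ [x1 p1 ->] [x2 p2 ->]; exists (x1 - x2); rewrite ?mulrnBl //; apply: p_primaryB.
  - by move=> _ [y py ->]; apply: p_primaryMn.
  - move=> _ [y py ->]; have [f tf [h ph ->]] := tdecomp N.+1 y py.
    exists (h *+ p ^ N *+ p ^ N); first by exists (h *+ p ^ N) => //; apply: p_primaryMn.
    by rewrite mulrnDl (spanN f) // add0r -!mulrnA expnSr mulnAC mulnA.
have pN_gt0 : (0 < p ^ N)%N by rewrite expn_gt0 prime_gt0.
have [l lsums] := finite_sums_modn t pN_gt0.
exists l => x /(tdecomp N)[_ [c ->] [h /pN hN ->]]; rewrite hN addr0.
suff -> : \sum_(i < size t) t`_i *+ c i = \sum_(i < size t) t`_i *+ (c i %% p ^ N).
  exact: lsums.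
by apply: eq_bigr => i _; apply/mulrn_modn/tN/mem_nth.
Qed.

End FiniteModP.

Section InfiniteModP.
Variables (G : zmodType) (p : nat).
Hypotheses (p_pr : prime p) (infG : ~ finite_mod_p G p).

Lemma exists_p_independent (s : seq G) :
  exists x, forall c : nat -> nat, ~ p_multiple p (x - \sum_(i < size s) s`_i *+ c i).
Proof.
apply: NNPP => nox; apply: infG.
have [l lsums] := finite_sums_modn s (prime_gt0 p_pr).
exists l => x; have [c xc] : exists c, p_multiple p (x - \sum_(i < size s) s`_i *+ c i).
  by apply: NNPP => noc; apply: nox; exists x => c xc; apply: noc; exists c.
exists (\sum_(i < size s) s`_i *+ (c i %% p)) => //; apply: p_multiple_trans xc _.
by rewrite -sumrB; apply: p_multiple_sum => i; apply: p_multiple_modn; rewrite modn_mod.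
Qed.

Lemma exists_p_independent_seq :
  exists g : nat -> G, forall n (c : nat -> nat), ~ p_multiple p (g n - \sum_(i < n) g i *+ c i).
Proof.
pose indep (s : seq G) (x : G) := forall c : nat -> nat,
  ~ p_multiple p (x - \sum_(i < size s) s`_i *+ c i).
pose next (s : seq G) := epsilon (inhabits 0) (indep s).
pose g (n : nat) := next (iter n (fun s => rcons s (next s)) [::]).
have gE n : iter n (fun s => rcons s (next s)) [::] = mkseq g n.
  by elim: n => [//|n IHn]; rewrite mkseqS -IHn.
exists g => n c.
have -> : \sum_(i < n) g i *+ c i = \sum_(i < size (mkseq g n)) (mkseq g n)`_i *+ c i.
  by rewrite size_mkseq; apply: eq_bigr => i _; rewrite nth_mkseq.
have -> : g n = next (mkseq g n) by rewrite -gE.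
exact: epsilon_spec (inhabits 0) _ (exists_p_independent _) c.
Qed.

End InfiniteModP.

Section FpValues.
Variable p : nat.
Hypothesis p_pr : prime p.

Lemma val_Fp_lt (a : 'F_p) : (a < p)%N.
Proof. by apply: leq_trans (ltn_ord a) _; rewrite Fp_cast. Qed.

Lemma val_FpD (a b : 'F_p) : (nat_of_ord (a + b)%R = a + b %[mod p])%N.
Proof.
have -> : a + b = (nat_of_ord a + nat_of_ord b)%:R :> 'F_p by rewrite natrD !natr_Zp.
by rewrite val_Fp_nat // modn_mod.
Qed.

Lemma val_FpMn (a : 'F_p) m : (nat_of_ord (a *+ m)%R = a * m %[mod p])%N.
Proof.
have -> : a *+ m = (nat_of_ord a * m)%:R :> 'F_p by rewrite natrM natr_Zp mulr_natr.
by rewrite val_Fp_nat // modn_mod.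
Qed.

End FpValues.

Section PolyCombination.
Variables (G : zmodType) (p : nat) (g : nat -> G).
Hypothesis p_pr : prime p.

Definition poly_comb (q : {poly 'F_p}) : G := \sum_(i < size q) g i *+ nat_of_ord q`_i.

Lemma poly_comb_widen n (q : {poly 'F_p}) :
  (size q <= n)%N -> poly_comb q = \sum_(i < n) g i *+ nat_of_ord q`_i.
Proof.
move=> qn; rewrite /poly_comb (big_ord_widen n (fun i => g i *+ nat_of_ord q`_i) qn) big_mkcond.
by apply: eq_bigr => i _; case: ltnP => // qi; rewrite nth_default.
Qed.

Lemma poly_combD q1 q2 :
  p_multiple p (poly_comb (q1 + q2) - (poly_comb q1 + poly_comb q2)).
Proof.
rewrite (poly_comb_widen (size_polyD q1 q2)).
rewrite (poly_comb_widen (leq_maxl _ (size q2))) (poly_comb_widen (leq_maxr (size q1) _)).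
rewrite -big_split -sumrB; apply: p_multiple_sum => i /=.
by rewrite coefD -mulrnDr; apply/p_multiple_modn/val_FpD.
Qed.

Lemma poly_combB q1 q2 :
  p_multiple p (poly_comb (q1 - q2) - (poly_comb q1 - poly_comb q2)).
Proof.
rewrite opprB addrA; have := poly_combD (q1 - q2) q2.
by rewrite subrK => /p_multipleN; rewrite opprB.
Qed.

Lemma poly_combMn q m : p_multiple p (poly_comb (q *+ m) - poly_comb q *+ m).
Proof.
have qm : (size (q *+ m) <= size q)%N.
  by apply/leq_sizeP => j qj; rewrite coefMn nth_default ?mul0rn.
rewrite (poly_comb_widen qm) /poly_comb -sumrMnl -sumrB; apply: p_multiple_sum => i.
by rewrite coefMn -mulrnA; apply/p_multiple_modn/val_FpMn.
Qed.

Hypothesis g_indep : forall n (c : nat -> nat), ~ p_multiple p (g n - \sum_(i < n) g i *+ c i).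

(* Scale [q] so that its leading coefficient becomes 1: then [g (size q).-1]
   is congruent mod [pG] to a combination of the earlier [g i]. *)
Lemma poly_comb_p_multiple q : p_multiple p (poly_comb q) -> q = 0.
Proof.
move=> pq; apply: NNPP => q_neq0.
have [n sq] : exists n, size q = n.+1.
  by case sq: (size q) => [|n]; [case: q_neq0; apply/eqP; rewrite -size_poly_eq0 sq | exists n].
have [m vm] : exists m, (nat_of_ord (q`_n)%R * m = 1 %[mod p])%N.
  apply: coprime_inv_modn; first exact: prime_gt0.
  rewrite coprime_sym prime_coprime // gtnNdvd ?val_Fp_lt // lt0n.
  apply: contra_notN q_neq0 => /eqP qn0; apply/eqP; rewrite -lead_coef_eq0 lead_coefE sq.
  exact/eqP/val_inj.
apply: (g_indep (n := n) (c := fun i => nat_of_ord (q`_i)%R * m * p.-1)%N).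
apply: (p_multiple_trans (y := g n *+ (nat_of_ord (q`_n)%R * m))).
  by rewrite -{1}[g n]mulr1n; apply: p_multiple_modn; rewrite vm.
apply: (p_multiple_trans (y := - \sum_(i < n) g i *+ (nat_of_ord (q`_i)%R * m))).
  move: pq => /(p_multipleMn m); rewrite opprK /poly_comb sq big_ord_recr /=.
  by rewrite mulrnDl -sumrMnl addrC mulrnA; under eq_bigr do rewrite mulrnA.
rewrite -opprD -big_split; apply/p_multipleN/p_multiple_sum => i /=.
rewrite -mulrnDr addn_mulnpred ?prime_gt0 // mulrnA; exact: p_multiple_mulrn.
Qed.

End PolyCombination.

Section ModPComplement.
Variables (G V : zmodType) (p : nat) (E : V -> G).
Hypotheses (p_pr : prime p)
  (EB : forall a b, p_multiple p (E (a - b) - (E a - E b)))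
  (EMn : forall a m, p_multiple p (E (a *+ m) - E a *+ m))
  (E_inj : forall a, p_multiple p (E a) -> a = 0).

Lemma p_multiple_E0 : p_multiple p (E 0).
Proof. by have := EB 0 0; rewrite !subrr subr0. Qed.

(* The middle clause means [pG \subset B] unless [B] is empty: the empty set
   must qualify, since Zorn's lemma is applied to its union, the empty chain. *)
Definition mod_p_complement (B : G -> Prop) :=
  [/\ forall x y, B x -> B y -> B (x - y), forall x y, B y -> B (x *+ p) &
      forall a, B (E a) -> a = 0].

Lemma exists_maximal_complement : exists A, mod_p_complement A /\
  forall B, classical_sets.proper A B -> ~ mod_p_complement B.
Proof.
apply: classical_sets.Zorn_bigcup => F Fc Ftot; split.
- move=> x y [X FX Xx] [Y FY Yy].
  have [XY|YX] := Ftot X Y FX FY.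
  + by exists Y => //; case: (Fc Y FY) => YB _ _; apply: YB => //; apply: XY.
  + by exists X => //; case: (Fc X FX) => XB _ _; apply: XB => //; apply: YX.
- by move=> x y [X FX Xy]; exists X => //; case: (Fc X FX) => _ Xp _; apply: Xp Xy.
- by move=> a [X FX XEa]; case: (Fc X FX) => _ _; apply.
Qed.

Section Maximal.
Variable A : G -> Prop.
Hypotheses (AB : forall x y, A x -> A y -> A (x - y))
  (Ap : forall x, A (x *+ p)) (AE : forall a, A (E a) -> a = 0)
  (Amax : forall B, classical_sets.proper A B -> ~ mod_p_complement B).

Lemma complement_subgroup : is_subgroup A.
Proof. by split => //; rewrite -(mul0rn _ p); apply: Ap. Qed.

Lemma complement_congr x y : A x -> p_multiple p (y - x) -> A y.
Proof.
move=> Ax [h yx]; rewrite -(subrK x y) yx.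
by apply: subgroupD (Ap h) Ax; apply: complement_subgroup.
Qed.

Lemma complement_cover x : exists a, A (x - E a).
Proof.
apply: NNPP => nox; have subA := complement_subgroup.
(* Otherwise [A + Zx] would be a strictly larger complement. *)
pose B (y : G) := exists n, A (y - x *+ n).
apply: (Amax (B := B)); first split => [y Ay|BA].
- by exists 0%N; rewrite mulr0n subr0.
- apply: nox; exists 0; apply: complement_congr (BA x _) _.
    by exists 1%N; rewrite mulr1n subrr; case: subA.
  by rewrite addrAC subrr add0r; apply/p_multipleN/p_multiple_E0.
split => [y1 y2 [n1 A1] [n2 A2]|z y _|a [n An]].
- exists (n1 + n2 * p.-1)%N; apply: complement_congr (AB A1 A2) _.
  rewrite (subrACA y1 (x *+ n1)) (subrACA (y1 - y2)) subrr sub0r opprB.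
  rewrite mulrnDr opprD addrACA subrr add0r -opprD -mulrnDr.
  by rewrite addn_mulnpred ?prime_gt0 // mulrnA; apply/p_multipleN/p_multiple_mulrn.
- by exists 0%N; rewrite mulr0n subr0.
have [/dvdnP[k nE]|p_ndvd_n] := boolP (p %| n)%N.
  apply/AE/(complement_congr An); rewrite subKr nE mulrnA.
  exact: p_multiple_mulrn.
have [m nm] : exists m, (n * m = 1 %[mod p])%N.
  by apply: coprime_inv_modn; rewrite ?prime_gt0 // coprime_sym prime_coprime.
case: nox; exists (a *+ m).
have Anm : A (x *+ (n * m) - E a *+ m).
  by rewrite mulrnA -opprB -mulrnBl; apply/(subgroupN subA)/(subgroupMn subA).
apply: complement_congr Anm _; rewrite subrACA.
apply: p_multipleB _ (EMn a m); rewrite -{1}[x]mulr1n.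
by apply: p_multiple_modn; rewrite nm.
Qed.

Lemma complement_unique x a b : A (x - E a) -> A (x - E b) -> a = b.
Proof.
move=> xa xb; apply/eqP; rewrite -subr_eq0; apply/eqP/AE.
apply: complement_congr (AB xb xa) _.
by rewrite (subrACA x) subrr sub0r opprB.
Qed.

End Maximal.

Lemma epimorphism_of_mod_p_embedding :
  exists f : G -> V, is_hom f /\ forall a, exists x, f x = a.
Proof.
have [A [[AB Ap AE] Amax]] := exists_maximal_complement.
have A0 : A 0.
  apply: NNPP => nA0; apply: (Amax (p_multiple p)).
    split => [x Ax|pA]; first by case: nA0; rewrite -(subrr x); apply: AB.
    by apply/nA0/pA/p_multiple0.
  by split; [apply: p_multipleB | move=> x _ _; apply: p_multiple_mulrn | apply: E_inj].
have {}Ap x : A (x *+ p) by apply: Ap A0.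
pose f x := epsilon (inhabits 0) (fun a => A (x - E a)).
have fP x : A (x - E (f x)) := epsilon_spec _ _ (complement_cover AB Ap AE Amax x).
exists f; split => [x y|a].
- apply: (complement_unique AB Ap AE (fP (x - y))).
  apply: (complement_congr AB Ap (AB _ _ (fP x) (fP y))).
  rewrite (subrACA x (E (f x))) (subrACA (x - y)) subrr sub0r.
  exact/p_multipleN/EB.
- exists (E a); apply: (complement_unique AB Ap AE (fP _)).
  by rewrite subrr; case: (complement_subgroup AB Ap).
Qed.

End ModPComplement.

(* [R[X] = X R[X] (+) R] with [X R[X]] isomorphic to [R[X]] via [q |-> q * X]. *)
Lemma poly_not_directly_finite (R : idomainType) : ~ directly_finite {poly R}.
Proof.
apply; exists (fun q => exists r, r * 'X = q), (fun q => exists c, q = c%:P).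
split.
- split; split.
  + by exists 0; rewrite mul0r.
  + by move=> _ _ [r <-] [s <-]; exists (r - s); rewrite mulrBl.
  + by exists 0.
  + by move=> _ _ [a ->] [b ->]; exists (a - b); rewrite polyCB.
- move=> _ [r <-] [c rc]; have := congr1 (fun q : {poly R} => q`_0) rc.
  by rewrite coefMX coefC /= => c0; rewrite rc -c0.
- move=> q; exists (drop_poly 1 q * 'X), (q`_0)%:P; split; first by exists (drop_poly 1 q).
  split; first by exists q`_0.
  have <- : take_poly 1 q = (q`_0)%:P.
    by apply/polyP => i; rewrite coef_take_poly coefC; case: i.
  by rewrite -{1}(poly_take_drop 1 q) expr1 addrC.
- by exists 1; split; [exists 1 | apply/eqP; rewrite oner_neq0].
- exists (fun r => r * 'X); split => [x y|x y|a]; first by rewrite mulrBl.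
  + by apply: mulIf; rewrite polyX_eq0.
  + by split=> [[r <-]|[r <-]]; exists r.
Qed.

Theorem proposition5p4 (G : zmodType) :
  reduced G -> super_directly_finite G -> ~ torsion_free G ->
  forall p : nat, prime p -> finite_pred (p_primary (G:=G) p).
Proof.
move=> redG sdfG _ p p_pr.
have [finG|infG] := classic (finite_mod_p G p); first exact: finite_p_primary p_pr redG finG.
have [g g_indep] := exists_p_independent_seq p_pr infG.
have [f [f_hom f_onto]] := epimorphism_of_mod_p_embedding p_pr (poly_combB g p_pr)
  (poly_combMn g p_pr) (poly_comb_p_multiple p_pr g_indep).
by case: (poly_not_directly_finite (sdfG _ f f_hom f_onto)).
Qed.
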